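(* Let $C_1,\dots,C_n:\mathbb R\to\mathbb R$ be strictly convex and continuously differentiable and satisfy Assumption A2 with scaling factors $\zeta_i>0$, $\boldsymbol Z=\mathrm{diag}(\zeta_i)$. Let $\boldsymbol L_Q$ be the Laplacian of a connected undirected graph on $\{1,\dots,n\}$ with symmetric positive edge weights. Then for every $\boldsymbol u\in\mathbb R^n$, $$\boldsymbol u^T\boldsymbol Z\boldsymbol L_Q\nabla C(\boldsymbol u)\ge0,$$ with equality if and only if $\nabla C(\boldsymbol u)\in\mathrm{range}(\mathbf 1_n)$, i.e. $\nabla C_1(u_1)=\dots=\nabla C_n(u_n)$. (In particular this holds for $\boldsymbol u=\boldsymbol u(\boldsymbol s)$ for any $\boldsymbol s$.)
   Context: Assumption A2: there exist a strictly convex $C^1$ function $C_{\mathrm o}:\mathbb R\to\mathbb R$ and $\zeta_i>0$ such that $\nabla C_i(u)=\nabla C_{\mathrm o}(\zeta_iu)$ for all $u\in\mathbb R$ and all $i$. $\nabla C(\boldsymbol u)=(\nabla C_i(u_i))_{i=1}^n$. Laplacian: $(\boldsymbol L_Q)_{ij}=-Q_{ij}$ for $i\ne j$, $(\boldsymbol L_Q)_{ii}=\sum_{j\ne i}Q_{ij}$, with $Q_{ij}=Q_{ji}>0$ on edges and $0$ otherwise. *)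

From HB Require Import structures.
From mathcomp Require Import all_boot all_order all_algebra.
From mathcomp Require Import all_classical all_reals all_analysis.
Set Implicit Arguments. Unset Strict Implicit. Unset Printing Implicit Defensive.
Import Order.TTheory GRing.Theory Num.Theory.
Import numFieldNormedType.Exports.
Local Open Scope ring_scope.

Definition strictly_convex (R : realType) (f : R -> R) : Prop :=
  forall x y t : R, x != y -> 0 < t -> t < 1 ->
    f (t * x + (1 - t) * y) < t * f x + (1 - t) * f y.

Definition C1 (R : realType) (f : R -> R) : Prop :=
  (forall x : R, derivable f x 1) /\ continuous (derive1 f).

(* Laplacian of the weight matrix Q (only off-diagonal entries are used) *)
Definition laplacian (R : realType) (n : nat) (Q : 'M[R]_n) : 'M[R]_n :=
  \matrix_(i, j) (if i == j then \sum_(k | k != i) Q i k else - Q i j).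

Definition edge_rel (R : realType) (n : nat) (Q : 'M[R]_n) : rel 'I_n :=
  fun i j => (i != j) && (0 < Q i j).

Definition weight_matrix (R : realType) (n : nat) (Q : 'M[R]_n) : Prop :=
  (forall i j, Q i j = Q j i) /\ (forall i j, 0 <= Q i j).

Definition connected_graph (R : realType) (n : nat) (Q : 'M[R]_n) : Prop :=
  forall i j : 'I_n, connect (edge_rel Q) i j.

(* gradient of C(u) = sum_i C_i(u_i) *)
Definition gradC (R : realType) (n : nat) (C : 'I_n -> R -> R) (u : 'cV[R]_n)
  : 'cV[R]_n := \col_i (derive1 (C i) (u i 0)).

From HB Require Import structures.
From mathcomp Require Import all_boot all_order all_algebra.
From mathcomp Require Import all_classical all_reals all_analysis.
From mathcomp Require Import ring lra.
Set Implicit Arguments. Unset Strict Implicit. Unset Printing Implicit Defensive.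
Import Order.TTheory GRing.Theory Num.Theory.
Import numFieldNormedType.Exports.
Local Open Scope ring_scope.
Local Open Scope classical_set_scope.

(* Write x := Z u and y := grad C(u).  Since Q is symmetric,
   x^T L_Q y = 1/2 sum_ij Q_ij (x_i - x_j) (y_i - y_j), and by A2
   y_i = C_o'(x_i) with C_o' strictly increasing, so every summand is
   nonnegative.  The form vanishes iff x_i = x_j, i.e. y_i = y_j, along every
   edge, which by connectedness means that y is constant. *)

Section StrictlyConvexDerivative.
Variables (R : realType) (f : R -> R).
Hypothesis convex_f : strictly_convex f.

Lemma derive1_difference_quotient x : derivable f x 1 ->
  (fun h => h^-1 * (f (h + x) - f x)) @ 0^' --> derive1 f x.
Proof.
move=> df; rewrite derive1E.
have -> : (fun h => h^-1 * (f (h + x) - f x)) =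
    (fun h => h^-1 *: ((f \o shift x) (h *: (1 : R)) - f x)).
  by apply/funext => h; rewrite /= [h *: 1]mulr1.
exact: df.
Qed.

Lemma derive1_le_slope x y : derivable f x 1 -> x < y ->
  derive1 f x * (y - x) <= f y - f x.
Proof.
move=> df xy; have yx_gt0 : 0 < y - x by rewrite subr_gt0.
rewrite -ler_pdivlMr //.
have quotient_cvg := cvg_dnbhs_at_right (derive1_difference_quotient df).
apply: (cvgr_to_le quotient_cvg).
near=> h.
have h_gt0 : 0 < h by near: h; exact: nbhs_right_gt.
have h_lt : h < y - x by near: h; exact: nbhs_right_lt.
pose t := h / (y - x).
have t_gt0 : 0 < t by rewrite divr_gt0.
have t_lt1 : t < 1 by rewrite ltr_pdivrMr // mul1r.
have := convex_f (negbT (gt_eqF xy)) t_gt0 t_lt1.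
have -> : t * y + (1 - t) * x = h + x by rewrite /t; field; rewrite lt0r_neq0.
rewrite ler_pdivrMl //.
have -> : h * ((f y - f x) / (y - x)) = t * (f y - f x) by rewrite /t; ring.
lra.
Unshelve. all: by end_near.
Qed.

Lemma slope_le_derive1 x y : derivable f y 1 -> x < y ->
  f y - f x <= derive1 f y * (y - x).
Proof.
move=> df xy; have yx_gt0 : 0 < y - x by rewrite subr_gt0.
have xy_lt0 : x - y < 0 by rewrite subr_lt0.
rewrite -ler_pdivrMr //.
have quotient_cvg := cvg_dnbhs_at_left (derive1_difference_quotient df).
apply: (cvgr_to_ge quotient_cvg).
near=> h.
have h_lt0 : h < 0 by near: h; exact: nbhs_left_lt.
have h_gt : x - y < h by near: h; exact: nbhs_left_gt.
pose t := - h / (y - x).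
have t_gt0 : 0 < t by rewrite divr_gt0 // oppr_gt0.
have t_lt1 : t < 1 by rewrite ltr_pdivrMr // mul1r ltrNl opprB.
have := convex_f (negbT (lt_eqF xy)) t_gt0 t_lt1.
have -> : t * x + (1 - t) * y = h + y by rewrite /t; field; rewrite lt0r_neq0.
rewrite ler_ndivlMl //.
have -> : h * ((f y - f x) / (y - x)) = t * (f x - f y) by rewrite /t; ring.
lra.
Unshelve. all: by end_near.
Qed.

(* Strictness comes from comparing both slope bounds with the chord slopes on
   the two halves of [a, b], which differ by strict convexity at the midpoint. *)
Lemma derive1_strictly_increasing : (forall x, derivable f x 1) ->
  {homo derive1 f : a b / a < b}.
Proof.
move=> df a b ab; pose m := (a + b) / 2.
have am : a < m by rewrite /m; lra.
have mb : m < b by rewrite /m; lra.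
have left_slope := derive1_le_slope (df a) am.
have right_slope := slope_le_derive1 (df b) mb.
have half_gt0 : 0 < (2 : R)^-1 by rewrite invr_gt0.
have half_lt1 : (2 : R)^-1 < 1 by rewrite invf_lt1 // ltr1n.
have := convex_f (negbT (lt_eqF ab)) half_gt0 half_lt1.
have -> : 2^-1 * a + (1 - 2^-1) * b = m by rewrite /m; field.
have -> : 1 - (2 : R)^-1 = 2^-1 by field.
move=> midpoint_convex.
have ma : m - a = b - m by rewrite /m; field.
rewrite ma in left_slope.
have bm_gt0 : 0 < b - m by rewrite subr_gt0.
by rewrite -(ltr_pM2r bm_gt0); lra.
Qed.

End StrictlyConvexDerivative.

Section IncreasingFunction.
Variables (R : realDomainType) (h : R -> R).
Hypothesis h_increasing : {homo h : a b / a < b}.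

Lemma increasing_subr_mul_gt0 a b : a != b -> 0 < (a - b) * (h a - h b).
Proof.
case: (ltgtP a b) => // [ab|ba] _.
- by rewrite nmulr_rgt0 ?subr_lt0 ?h_increasing.
- by rewrite mulr_gt0 ?subr_gt0 ?h_increasing.
Qed.

Lemma increasing_subr_mul_ge0 a b : 0 <= (a - b) * (h a - h b).
Proof.
have [->|ab] := eqVneq a b; first by rewrite subrr mul0r.
exact/ltW/increasing_subr_mul_gt0.
Qed.

End IncreasingFunction.

Section LaplacianForm.
Variables (R : realType) (n : nat) (Q : 'M[R]_n).

Definition edge_form (x y : 'cV[R]_n) :=
  \sum_i \sum_j Q i j * ((x i 0 - x j 0) * (y i 0 - y j 0)).

Lemma laplacian_mulmx (y : 'cV[R]_n) i :
  (laplacian Q *m y) i 0 = \sum_j Q i j * (y i 0 - y j 0).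
Proof.
rewrite mxE (bigD1 i) // [RHS](bigD1 i) //= subrr mulr0 add0r.
rewrite [RHS](eq_bigr _ (fun j _ => mulrBr _ _ _)) sumrB -mulr_suml.
rewrite !mxE eqxx; congr (_ + _).
rewrite -sumrN; apply: eq_bigr => j ji.
by rewrite !mxE eq_sym (negbTE ji) mulNr.
Qed.

Hypothesis Q_sym : forall i j, Q i j = Q j i.

(* Exchanging i and j in the double sum gives the symmetrised expression. *)
Lemma laplacian_form (x y : 'cV[R]_n) :
  (x^T *m laplacian Q *m y) 0 0 = edge_form x y / 2.
Proof.
have rowE : (x^T *m laplacian Q *m y) 0 0 =
    \sum_i x i 0 * \sum_j Q i j * (y i 0 - y j 0).
  rewrite -mulmxA mxE; apply: eq_bigr => i _.
  by rewrite laplacian_mulmx mxE.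
have swapE : (x^T *m laplacian Q *m y) 0 0 =
    \sum_i \sum_j Q i j * (x j 0 * (y j 0 - y i 0)).
  rewrite rowE exchange_big; apply: eq_bigr => j _.
  by rewrite mulr_sumr; apply: eq_bigr => i _; rewrite Q_sym; ring.
suff <- : (x^T *m laplacian Q *m y) 0 0 * 2 = edge_form x y.
  by rewrite mulfK ?pnatr_eq0.
rewrite mulr_natr mulr2n {1}rowE swapE -big_split /=.
apply: eq_bigr => i _; rewrite mulr_sumr -big_split /=.
by apply: eq_bigr => j _; ring.
Qed.

Hypothesis Q_ge0 : forall i j, 0 <= Q i j.
Variables x y : 'cV[R]_n.
Hypothesis monotone_xy : forall i j, 0 <= (x i 0 - x j 0) * (y i 0 - y j 0).

Let edge_term_ge0 i j : 0 <= Q i j * ((x i 0 - x j 0) * (y i 0 - y j 0)).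
Proof. exact: mulr_ge0. Qed.

Lemma edge_form_ge0 : 0 <= edge_form x y.
Proof. by apply: sumr_ge0 => i _; apply: sumr_ge0. Qed.

Lemma edge_form_eq0P : edge_form x y = 0 <->
  (forall i j, 0 < Q i j -> (x i 0 - x j 0) * (y i 0 - y j 0) = 0).
Proof.
split=> [form0 i j Qij | edge0].
- have row_ge0 k : 0 <= \sum_j Q k j * ((x k 0 - x j 0) * (y k 0 - y j 0)).
    by apply: sumr_ge0.
  have := psumr_eq0P (fun k _ => row_ge0 k) form0 isT => /(_ i) row0.
  have := psumr_eq0P (fun k _ => edge_term_ge0 i k) row0 isT => /(_ j) /eqP.
  by rewrite mulf_eq0 gt_eqF //= => /eqP.
- apply: big1 => i _; apply: big1 => j _.
  have [Q0|Qij] := eqVneq (Q i j) 0; first by rewrite Q0 mul0r.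
  by rewrite edge0 ?mulr0 // lt0r Qij Q_ge0.
Qed.

End LaplacianForm.

Lemma connect_invariant (T : finType) (e : rel T) (A : Type) (g : T -> A) :
  (forall i j, e i j -> g i = g j) -> forall i j, connect e i j -> g i = g j.
Proof.
move=> edge_eq i j /connectP[p]; elim: p i => [|k p IH] i /=; first by move=> _ ->.
by case/andP=> /edge_eq -> /IH.
Qed.

Lemma col_constant (R : pzRingType) (n : nat) (v : 'cV[R]_n) :
  (forall i j, v i 0 = v j 0) -> exists c : R, v = c *: const_mx 1.
Proof.
case: n v => [|n] v v_eq; first by exists 0; apply/matrixP => -[].
by exists (v ord0 0); apply/matrixP => i k; rewrite ord1 !mxE mulr1 (v_eq i ord0).
Qed.

Theorem corollary1 (R : realType) (n : nat) (C : 'I_n -> R -> R)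
  (Co : R -> R) (zeta : 'I_n -> R) (Q : 'M[R]_n)
  (hC : forall i, strictly_convex (C i) /\ C1 (C i))
  (hCo : strictly_convex Co /\ C1 Co)
  (hzeta : forall i, 0 < zeta i)
  (hA2 : forall i (x : R), derive1 (C i) x = derive1 Co (zeta i * x))
  (hQ : weight_matrix Q) (hconn : connected_graph Q)
  (u : 'cV[R]_n) :
  let Z := diag_mx (\row_i zeta i) in
  let val := (u^T *m Z *m laplacian Q *m gradC C u) 0 0 in
  0 <= val /\
  (val = 0 <-> exists c : R, gradC C u = c *: const_mx 1).
Proof.
move=> Z val; case: hCo => [convex_Co [derivable_Co _]]; case: hQ => [Q_sym Q_ge0].
have Co'_increasing := derive1_strictly_increasing convex_Co derivable_Co.
set x := Z *m u; set y := gradC C u.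
have yE i : y i 0 = derive1 Co (x i 0) by rewrite /x mul_diag_mx !mxE hA2.
have valE : val = edge_form Q x y / 2.
  by rewrite -laplacian_form // /val /x trmx_mul tr_diag_mx.
have monotone_xy i j : 0 <= (x i 0 - x j 0) * (y i 0 - y j 0).
  by rewrite !yE; exact: increasing_subr_mul_ge0.
rewrite valE; split; first by rewrite divr_ge0 ?edge_form_ge0.
have half_eq0 : edge_form Q x y / 2 = 0 <-> edge_form Q x y = 0.
  by split=> [/eqP|->]; rewrite ?mul0r // mulf_eq0 invr_eq0 pnatr_eq0 orbF => /eqP.
have form_eq0P := edge_form_eq0P Q_ge0 monotone_xy.
split=> [/half_eq0/form_eq0P edge0 | [c yc]].
- apply/col_constant => i j.
  apply: (connect_invariant (g := fun k => y k 0)) (hconn i j) => {}i {}j.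
  case/andP=> _ /edge0 /eqP; apply: contraTeq => yij.
  rewrite !yE in yij *; rewrite gt_eqF //.
  by apply: increasing_subr_mul_gt0 => //; apply: contra_neq yij => ->.
- by apply/half_eq0/form_eq0P => i j _; rewrite yc !mxE subrr mulr0.
Qed.
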